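(* Let $F$ be a $4$-regular graph, let $E\subseteq E(F)$ be based in $F$, and let $C$ be an oriented Euler system of $F$. Then $\Gamma_{E,C}$ is an integral cycle basis of $F-E$.
   Context: Graphs: $G=(V,H,E,\epsilon)$ with finite sets of vertices $V$ and half-edges $H$, a partition $E$ of $H$ into unordered pairs (edges), and $\epsilon:H\to V$; loops and multiple edges allowed. $G-E'$ deletes the edges of $E'$. $E'\subseteq E(G)$ is based in $G$ if it contains exactly one edge of each connected component of $G$. A directed version orders each edge as (tail, head). A directed single transition is an ordered pair of distinct half-edges incident with a common vertex. A closed walk is a sequence $((h_1,h_2),\dots,(h_{n-1},h_n))$ of directed single transitions with $\{h_2,h_3\},\{h_4,h_5\},\dots,\{h_n,h_1\}$ edges, up to cyclic shift. $\sigma(D,W)\in\mathbb Z^{E}$ counts, at each edge, traversals by $W$ along its direction in $D$ minus traversals against it. An oriented circuit is a nonempty closed walk in which each half-edge occurs at most once (vertices may repeat). The cycle space of $D$ is the right null space over $\mathbb Q$ of its vertex-edge incidence matrix. A cycle basis of $G$ is a set $B$ of closed walks such that the $\sigma(D,W)$, $W\in B$, are pairwise distinct and form a basis of the cycle space of $D$; it is integral if every $\sigma(D,W)$, $W$ a closed walk of $G$, lies in the $\mathbb Z$-span of $\{\sigma(D,W'):W'\in B\}$ (independent of $D$). $F$ is $4$-regular if every vertex is incident with exactly $4$ half-edges. An oriented Euler system of $F$ consists of one oriented Eulerian circuit (traversing every edge exactly once) for each connected component of $F$; it visits each vertex exactly twice. For a vertex $v$, the oriented circuit induced by $C$ at $v$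 based on $E$ is the segment from $v$ back to $v$ of the oriented Eulerian circuit of the component of $v$ that does not traverse the edge of $E$ in that component, with the inherited orientation. $\Gamma_{E,C}$ is the set of all these oriented circuits, $v\in V(F)$. *)

From HB Require Import structures.
From mathcomp Require Import all_boot all_order all_algebra.
Set Implicit Arguments. Unset Strict Implicit. Unset Printing Implicit Defensive.
Import Order.TTheory GRing.Theory Num.Theory.

(* Graphs with half-edges.  A graph has a finite vertex type gV and a finite *)
(* edge type gE; the half-edges are the pairs (e, b), b : bool, so that the  *)
(* partition of the half-edges into edges is {(e,false),(e,true)}; geps is   *)
(* the incidence map epsilon : H -> V.  Loops and multiple edges allowed.   *)
Record graph := Graph { gV : finType; gE : finType; geps : (gE * bool)%type -> gV }.

Definition half (G : graph) := (gE G * bool)%type.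
Definition opp (G : graph) (h : half G) : half G := (h.1, ~~ h.2).

Definition trans (G : graph) := (half G * half G)%type.
Definition is_transition (G : graph) (t : trans G) : bool :=
  (t.1 != t.2) && (geps t.1 == geps t.2).

(* A closed walk ((h1,h2),...,(h_{n-1},h_n)) is represented by the sequence *)
(* of its transitions; the cyclic linking condition says that the second    *)
(* half-edge of each transition and the first half-edge of the next one     *)
(* (cyclically) form an edge.  Cyclic shifts are represented by rot.        *)
Definition walk (G : graph) := seq (trans G).
Definition closed_walk (G : graph) (W : walk G) : bool :=
  all (@is_transition G) W &&
  all2 (fun t u => u.1 == opp t.2) W (rot 1 W).

(* the half-edges from which W leaves along an edge: the traversal after    *)
(* transition (a,b) goes from b to opp b                                    *)
Definition departures (G : graph) (W : walk G) : seq (half G) := map snd W.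

Definition oriented_circuit (G : graph) (W : walk G) : bool :=
  [&& W != [::], closed_walk W & uniq (flatten [seq [:: t.1; t.2] | t <- W])].

Definition del (G : graph) (X : {set gE G}) : graph :=
  @Graph (gV G) {e : gE G | e \notin X} (fun h => geps (val h.1, h.2)).

(* Orientations, sigma, cycle space.  A directed version D of G is given by  *)
(* d : gE G -> bool: the edge e is ordered (tail, head) = ((e, d e),        *)
(* (e, ~~ d e)).                                                            *)
Local Open Scope ring_scope.

Definition sigma (G : graph) (d : gE G -> bool) (W : walk G) : {ffun gE G -> int} :=
  [ffun e => \sum_(h <- departures W | h.1 == e) (if h.2 == d e then 1 else -1)].

Definition sigmaQ (G : graph) (d : gE G -> bool) (W : walk G) : {ffun gE G -> rat} :=
  [ffun e => (sigma d W e)%:~R].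

(* vertex-edge incidence matrix of D (column of a loop is zero) *)
Definition incidence (G : graph) (d : gE G -> bool) (v : gV G) (e : gE G) : rat :=
  (geps (e, ~~ d e) == v)%:R - (geps (e, d e) == v)%:R.

Definition in_cycle_space (G : graph) (d : gE G -> bool) (x : {ffun gE G -> rat}) : Prop :=
  forall v : gV G, \sum_(e : gE G) incidence d v e * x e = 0.

Definition basis_of_cycle_space (G : graph) (d : gE G -> bool) (I : finType)
  (s : I -> {ffun gE G -> rat}) : Prop :=
  [/\ forall i, in_cycle_space d (s i),
      forall c : I -> rat, (forall e, \sum_(i : I) c i * s i e = 0) -> forall i, c i = 0 &
      forall x, in_cycle_space d x -> exists c : I -> rat, forall e, x e = \sum_(i : I) c i * s i e].

(* cycle basis, given as a family of closed walks indexed by a finite type  *)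
(* (pairwise distinct sigma-vectors = injectivity), for every orientation D *)
Definition cycle_basis (G : graph) (I : finType) (B : I -> walk G) : Prop :=
  (forall i, closed_walk (B i)) /\
  forall d : gE G -> bool,
    injective (fun i => sigma d (B i)) /\ basis_of_cycle_space d (fun i => sigmaQ d (B i)).

Definition integral (G : graph) (I : finType) (B : I -> walk G) : Prop :=
  forall d : gE G -> bool, forall W : walk G, closed_walk W ->
    exists c : I -> int, forall e, sigma d W e = \sum_(i : I) c i * sigma d (B i) e.

Definition integral_cycle_basis (G : graph) (I : finType) (B : I -> walk G) : Prop :=
  cycle_basis B /\ integral B.

Definition four_regular (G : graph) : Prop :=
  forall v : gV G, #|[set h : half G | geps h == v]| = 4%N.

Definition adj (G : graph) : rel (gV G) :=
  fun u v => [exists e : gE G, exists b : bool,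
                (geps (e, b) == u) && (geps (e, ~~ b) == v)].

Definition edge_in_comp (G : graph) (v : gV G) (e : gE G) : bool :=
  connect (@adj G) v (geps (e, false)).

Definition based (G : graph) (X : {set gE G}) : Prop :=
  forall v : gV G, #|[set e in X | edge_in_comp v e]| = 1%N.

Definition euler_circ (G : graph) (W : walk G) (v : gV G) : bool :=
  closed_walk W &&
  [forall e : gE G, count (fun h : half G => h.1 == e) (departures W) == edge_in_comp v e].

Definition euler_system (G : graph) (C : seq (walk G)) : Prop :=
  [/\ all (@closed_walk G) C,
      forall v : gV G, count (fun W => euler_circ W v) C = 1%N &
      all (fun W => [exists v, euler_circ W v]) C].

(* S is the oriented circuit induced by C at v based on X: rotating the     *)
(* Eulerian circuit W of v's component as (x,y) :: p ++ (z,u) :: q with both *)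
(* transitions (x,y), (z,u) at v, the segment from v back to v leaving via  *)
(* y and returning via z is the closed walk p followed by the transition    *)
(* (z,y); it is the one that traverses no edge of X.                        *)
Definition induced_circuit (G : graph) (X : {set gE G}) (C : seq (walk G))
  (v : gV G) (S : walk G) : Prop :=
  exists2 W, W \in C &
    exists n (x y z u : half G) (p q : walk G),
      [/\ rot n W = (x, y) :: p ++ (z, u) :: q,
          geps x = v, geps z = v,
          S = rcons p (z, y) &
          ~~ has (fun h : half G => h.1 \in X) (departures S)].

Definition lift_half (G : graph) (X : {set gE G}) (h : half G) : option (half (del X)) :=
  omap (fun e => (e, h.2)) (insub h.1 : option {e : gE G | e \notin X}).

Definition lift_trans (G : graph) (X : {set gE G}) (t : trans G) : option (trans (del X)) :=
  match lift_half X t.1, lift_half X t.2 with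
  | Some a, Some b => Some (a, b)
  | _, _ => None
  end.

Definition lift_walk (G : graph) (X : {set gE G}) (W : walk G) : walk (del X) :=
  pmap (lift_trans X) W.

(* Let a_v be the transition by which the induced circuit S_v leaves v, and
   measure an edge vector x at a transition t by the flow of x out of the
   vertex through the two half-edges of t.  For sigma(S_w) this is 1 at a_w,
   while for v <> w the walk S_w either passes through a_v or avoids both of
   its half-edges, which gives 0.  These dual coordinates make the sigma(S_v)
   injective and linearly independent, and they give integral coefficients to
   every closed walk.  For spanning, subtract from a cycle x the combination
   with these coefficients: the remainder has zero flow through every a_v,
   hence, by conservation at the 4-regular vertex v, also through the second
   passage of the Euler circuit through v.  So the flow of the remainder is
   constant along every Euler circuit, and it vanishes because the circuit
   traverses the edge of E in its component. *)

From Pilot Require Import Defs.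
From mathcomp Require Import all_boot all_order all_algebra.
From mathcomp Require Import ring.
Set Implicit Arguments. Unset Strict Implicit. Unset Printing Implicit Defensive.
Import Order.TTheory GRing.Theory Num.Theory.
Import Defs.

Lemma sum_count_mem (T : finType) (P : pred T) (s : seq T) :
  \sum_(x | P x) count_mem x s = count P s.
Proof.
elim: s => [|a s IH] /=; first by rewrite big1.
rewrite big_split /= IH; congr (_ + _).
have [Pa|nPa] := boolP (P a).
  by rewrite (bigD1 a) //= eqxx big1 // => x /andP[_ /negbTE]; rewrite eq_sym => ->.
by rewrite big1 // => x Px; case: eqP => // ax; rewrite ax Px in nPa.
Qed.

Lemma uniq_map_inj_in (T1 T2 : eqType) (f : T1 -> T2) (s : seq T1) :
  uniq (map f s) -> {in s &, injective f}.
Proof.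
elim: s => [|a s IH] //= /andP[fa /IH inj] x y; rewrite !inE.
case/predU1P=> [->|xs]; case/predU1P=> [->|ys] // E.
- by move: fa; rewrite E map_f.
- by move: fa; rewrite -E map_f.
- exact: inj.
Qed.

Lemma count_eq1_eq (T : eqType) (P : pred T) (s : seq T) a b :
  count P s = 1%N -> a \in s -> b \in s -> P a -> P b -> a = b.
Proof.
rewrite -size_filter => s1 a_s b_s Pa Pb.
have : a \in filter P s by rewrite mem_filter Pa.
have : b \in filter P s by rewrite mem_filter Pb.
by case: (filter P s) s1 => [|c [|]] //= _; rewrite !inE => /eqP -> /eqP ->.
Qed.

Lemma rot_of_rot (T : Type) m n (s : seq T) : exists k, rot m (rot n s) = rot k s.
Proof.
have [ns|sn] := leqP n (size s); last by exists m; rewrite (@rot_oversize _ n) // ltnW.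
have [ms|sm] := leqP m (size s); last by exists n; rewrite rot_oversize // size_rot ltnW.
by eexists; rewrite rot_add_mod.
Qed.

Lemma path_prev (T : eqType) (e : rel T) a s b :
  path e a s -> b \in s -> exists2 c, c \in a :: s & e c b.
Proof.
elim: s a => [|c s IH] a //= /andP[ac cs]; rewrite inE => /predU1P[->|bs].
  by exists a; rewrite ?mem_head.
by have [d ds db] := IH _ cs bs; exists d; rewrite // inE ds orbT.
Qed.

Lemma cycle_eq_in (T R : eqType) (e : rel T) (f : T -> R) (s : seq T) :
  cycle e s -> {in s &, forall a b, e a b -> f a = f b} -> {in s &, forall a b, f a = f b}.
Proof.
move=> cs fe a b as_ bs; have [i s' Es] := rot_to as_.
have s's : all (mem s) (a :: s') by apply/allP=> c; rewrite -Es mem_rot.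
have ps' : path e a s' by move: cs; rewrite -(rot_cycle i) Es /= rcons_path => /andP[].
have eq_trans : transitive (fun c d : T => f c == f d) by move=> c d d' /eqP -> /eqP ->.
have /(order_path_min eq_trans)/allP fs' : path (fun c d => f c == f d) a s'.
  by apply: sub_in_path s's ps' => c d cs' ds' /(fe c d cs' ds') ->.
by move: bs; rewrite -(mem_rot i) Es inE => /predU1P[-> // | /fs' /eqP].
Qed.

Section Walks.
Variable G : graph.
Implicit Types (h k : half G) (t u : trans G) (W : walk G).

Lemma oppK : involutive (@opp G).
Proof. by case=> e b; rewrite /opp /= negbK. Qed.

Lemma opp_neq h : opp h != h.
Proof. by case: h => e b; rewrite /opp xpair_eqE eqxx /=; case: b. Qed.

Lemma same_edge_halves h k : k.1 = h.1 -> k = h \/ k = opp h.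
Proof.
case: k h => e b [e' b'] /= ->; rewrite /opp /=.
by case: b; case: b'; [left|right|right|left].
Qed.

Definition linked t u := u.1 == opp t.2.

Lemma closed_walkE W : closed_walk W = all (@is_transition G) W && cycle linked W.
Proof.
rewrite /closed_walk; congr (_ && _); case: W => [|a s] //.
rewrite rot1_cons /=; elim: s a {2 3}a => [|b s IH] a c //=.
by rewrite -IH.
Qed.

Lemma closed_walk_rot n W : closed_walk (rot n W) = closed_walk W.
Proof.
have rW : perm_eq (rot n W) W by rewrite perm_rot.
by rewrite !closed_walkE rot_cycle (perm_all _ rW).
Qed.

Lemma closed_walk_entries W :
  closed_walk W -> map fst (rot 1 W) = map (fun t => opp t.2) W.
Proof.
case/andP=> _; elim: W (rot 1 W) => [|a s IH] [|b s'] //=.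
by case/andP=> /eqP -> /IH ->.
Qed.

Lemma closed_walk_next W t :
  closed_walk W -> t \in W -> exists2 t', t' \in W & t'.1 = opp t.2.
Proof.
move=> cW tW; have: opp t.2 \in map fst (rot 1 W).
  by rewrite (closed_walk_entries cW); apply/mapP; exists t.
by rewrite map_rot mem_rot => /mapP[t' t'W ->]; exists t'.
Qed.

Lemma closed_walk_prev W t :
  closed_walk W -> t \in W -> exists2 t', t' \in W & t.1 = opp t'.2.
Proof.
move=> cW tW; have: t.1 \in map fst (rot 1 W) by rewrite map_rot mem_rot map_f.
by rewrite (closed_walk_entries cW) => /mapP[t' t'W ->]; exists t'.
Qed.

Lemma transition_geps W t : closed_walk W -> t \in W -> geps t.1 = geps t.2.
Proof. by case/andP=> /allP trW _ /trW /andP[_ /eqP]. Qed.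

End Walks.

Arguments linked {G} t u : simpl never.
Arguments departures : simpl never.

Section Flows.
Variable G : graph.
Implicit Types (h : half G) (t : trans G) (W : walk G) (s : seq (half G)).
Local Open Scope ring_scope.

Definition net s h : int := (count_mem h s)%:Z - (count_mem (opp h) s)%:Z.

Definition trans_net s t : int := net s t.1 + net s t.2.

Lemma net_opp s h : net s (opp h) = - net s h.
Proof. by rewrite /net oppK opprB. Qed.

Lemma net_out s h : h \notin s -> opp h \notin s -> net s h = 0.
Proof. by move=> hs ohs; rewrite /net !(count_memPn _) ?subrr. Qed.

Lemma opp_notin s h : uniq (map fst s) -> h \in s -> opp h \notin s.
Proof.
move=> us hs; apply/negP=> ohs.
by have := opp_neq h; rewrite (uniq_map_inj_in us ohs hs) ?eqxx.
Qed.

Lemma net_mem s h : uniq (map fst s) -> h \in s -> net s h = 1.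
Proof.
move=> us hs; have /map_uniq s_uniq := us.
by rewrite /net !count_uniq_mem // hs (negbTE (opp_notin us hs)).
Qed.

Lemma net_opp_mem s h : uniq (map fst s) -> opp h \in s -> net s h = -1.
Proof. by move=> us ohs; rewrite -[h]oppK net_opp net_mem. Qed.

Definition half_sign (R : pzRingType) (d : gE G -> bool) h : R :=
  if h.2 == d h.1 then 1 else -1.

(* [x] read on the edge of [h] as a flow leaving the vertex of [h]: the
   orientation [d] makes [(e, d e)] the tail of [e]. *)
Definition half_flow (R : pzRingType) d (x : gE G -> R) h : R := x h.1 * half_sign R d h.

Definition trans_flow (R : pzRingType) d (x : gE G -> R) t : R :=
  half_flow d x t.1 + half_flow d x t.2.

Lemma half_flow_opp (R : pzRingType) d (x : gE G -> R) h :
  half_flow d x (opp h) = - half_flow d x h.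
Proof.
case: h => e b; rewrite /half_flow /half_sign /=.
by case: b; case: (d e); rewrite ?mulrN ?mulrN1 ?opprK.
Qed.

Lemma half_flow_sigma d W h : half_flow d (sigma d W) h = net (departures W) h.
Proof.
rewrite /half_flow /sigma ffunE; elim: (departures W) => [|k s IH].
  by rewrite big_nil mul0r /net /= subrr.
rewrite big_cons /net /=; case: eqP => [E|NE].
  rewrite mulrDl IH /net; case: k E {IH} => k1 k2 /= ->; case: h => h1 h2 /=.
  rewrite /half_sign /opp /= !xpair_eqE /= eqxx /=.
  by case: k2; case: h2; case: (d h1); rewrite /= ?PoszD ?addrA; ring.
rewrite IH /net; have -> : (k == h) = false by apply/eqP=> E; apply: NE; rewrite E.
by have -> : (k == opp h) = false by apply/eqP=> E; apply: NE; rewrite E.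
Qed.

Lemma sigmaQE d W e : sigmaQ d W e = (sigma d W e)%:~R.
Proof. by rewrite ffunE. Qed.

Lemma half_flow_sigmaQ d W h :
  half_flow d (sigmaQ d W) h = (net (departures W) h)%:~R.
Proof.
have half_signE : half_sign rat d h = (half_sign int d h)%:~R by rewrite /half_sign; case: ifP.
by rewrite -(half_flow_sigma d) /half_flow ffunE half_signE intrM.
Qed.

Lemma trans_flow_sigmaQ d W t :
  trans_flow d (sigmaQ d W) t = (trans_net (departures W) t)%:~R.
Proof. by rewrite /trans_flow !half_flow_sigmaQ -intrD. Qed.

Lemma trans_net_sigma d W t : trans_net (departures W) t = trans_flow d (sigma d W) t.
Proof. by rewrite /trans_flow !half_flow_sigma. Qed.

Lemma trans_flowB (R : pzRingType) d (x y : gE G -> R) t :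
  trans_flow d (fun e => x e - y e) t = trans_flow d x t - trans_flow d y t.
Proof. by rewrite /trans_flow /half_flow !mulrBl addrACA opprD. Qed.

Lemma trans_flow_sum (R : pzRingType) (I : finType) d (c : I -> R) (x : I -> gE G -> R) t :
  trans_flow d (fun e => \sum_i c i * x i e) t = \sum_i c i * trans_flow d (x i) t.
Proof.
rewrite /trans_flow /half_flow !mulr_suml -big_split /=.
by apply: eq_bigr => i _; rewrite mulrDr !mulrA.
Qed.

Lemma sum_half_flow_at d (x : gE G -> rat) v :
  \sum_(h | geps h == v) half_flow d x h = - \sum_e incidence d v e * x e.
Proof.
rewrite big_mkcond -sumrN (eq_bigr (fun h : half G => (fun e b =>
  if geps (e, b) == v then half_flow d x (e, b) else 0) h.1 h.2)); last by case.
rewrite -(pair_bigA _ (fun e b => if geps (e, b) == v then half_flow d x (e, b) else 0)) /=.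
apply: eq_bigr => e _; rewrite big_bool /half_flow /half_sign /incidence /=.
by case: (d e); case: (geps (e, true) == v); case: (geps (e, false) == v); rewrite /=; ring.
Qed.

Lemma in_cycle_spaceP d x :
  in_cycle_space d x <-> forall v, \sum_(h | geps h == v) half_flow d x h = 0.
Proof.
split=> [xC v | H v]; first by rewrite sum_half_flow_at xC oppr0.
by apply/eqP; rewrite -oppr_eq0 -sum_half_flow_at H.
Qed.

Lemma sum_net_closed_walk W v :
  closed_walk W -> \sum_(h | geps h == v) net (departures W) h = 0.
Proof.
move=> cW.
have count_opp h : count_mem (opp h) (departures W) = count_mem h (map (@opp G) (departures W)).
  by rewrite [RHS]count_map; apply: eq_count => k /=; rewrite -{1}[k](@oppK G) (can_eq (@oppK G)).
rewrite /net sumrB; under [X in X - _]eq_bigr do rewrite -[_%:Z]natz.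
under [X in _ - X]eq_bigr do rewrite count_opp -[_%:Z]natz.
rewrite -!natr_sum !sum_count_mem.
have -> : map (@opp G) (departures W) = map fst (rot 1 W).
  by rewrite (closed_walk_entries cW) /departures -map_comp.
have rW : perm_eq (rot 1 W) W by rewrite perm_rot.
rewrite ((permP (perm_map _ rW)) _) /departures !count_map.
suff -> : count (preim snd (fun h => geps h == v)) W = count (preim fst (fun h => geps h == v)) W.
  by rewrite subrr.
by apply: eq_in_count => t /(transition_geps cW) /= ->.
Qed.

Lemma closed_walk_cycle_space d W : closed_walk W -> in_cycle_space d (sigmaQ d W).
Proof.
move=> cW; apply/in_cycle_spaceP => v.
under eq_bigr do rewrite half_flow_sigmaQ.
by rewrite -rmorph_sum sum_net_closed_walk.
Qed.

End Flows.

(* [T] is an Euler circuit rotated to start with its first passage [a] through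
   [v], [b] is the second passage, [S] the circuit induced at [v], and [D1],
   [D2] are the departures of the two segments of [T]. *)
Section Splitting.
Variables (G : graph) (v : gV G) (a b : trans G) (p q : walk G).
Local Notation T := (a :: p ++ b :: q).
Local Notation S := (rcons p (b.1, a.2)).
Local Notation D1 := (a.2 :: map snd p).
Local Notation D2 := (b.2 :: map snd q).
Hypotheses (T_closed : closed_walk T) (T_simple : uniq (map fst (departures T))).
Hypotheses (av : geps a.1 = v) (bv : geps b.1 = v).
Local Open Scope ring_scope.

Lemma departures_split : departures T = D1 ++ D2.
Proof. by rewrite /departures /= map_cat. Qed.

Lemma mem_departures_induced h : (h \in departures S) = (h \in D1).
Proof. by rewrite /departures map_rcons mem_rcons. Qed.

Lemma split_linked :
  [/\ path linked a p, linked (last a p) b, path linked b q & linked (last b q) a].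
Proof.
have := T_closed; rewrite closed_walkE => /andP[_].
by rewrite /= rcons_cat rcons_cons cat_path /= rcons_path => /and4P.
Qed.

Lemma split_simple : uniq (map fst (D1 ++ D2)).
Proof. by rewrite -departures_split. Qed.

Lemma induced_simple : uniq (map fst (departures S)).
Proof.
have := split_simple; rewrite map_cat cat_uniq => /andP[+ _].
by rewrite /departures map_rcons map_rcons rcons_uniq.
Qed.

Lemma split_disjoint h : h \in D1 -> h \notin D2.
Proof.
move=> h1; have /map_uniq := split_simple; rewrite cat_uniq => /and3P[_ /hasPn D12 _].
by apply/negP=> /D12; rewrite h1.
Qed.

Lemma opp_a1_in : opp a.1 \in D2.
Proof. by have [_ _ _ /eqP ->] := split_linked; rewrite oppK (map_f snd (mem_last b q)). Qed.

Lemma opp_b1_in : opp b.1 \in D1.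
Proof. by have [_ /eqP -> _ _] := split_linked; rewrite oppK (map_f snd (mem_last a p)). Qed.

Lemma net_second_segment h : h \in D2 -> net (departures S) h = 0 /\ net (departures S) (opp h) = 0.
Proof.
move=> h2; have hD : h \in D1 ++ D2 by rewrite mem_cat h2 orbT.
have h1 : h \notin departures S.
  by rewrite mem_departures_induced; apply: contraL h2; apply: split_disjoint.
have oh1 : opp h \notin departures S.
  rewrite mem_departures_induced; apply: contra (opp_notin split_simple hD).
  by rewrite mem_cat => ->.
by split; apply: net_out; rewrite ?oppK.
Qed.

Lemma trans_net_first : trans_net (departures S) a = 1.
Proof.
rewrite /trans_net (net_mem (h := a.2) induced_simple) ?mem_departures_induced ?mem_head //.
by have [_] := net_second_segment opp_a1_in; rewrite oppK => ->; rewrite add0r.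
Qed.

Lemma trans_net_second : trans_net (departures S) b = -1.
Proof.
rewrite /trans_net (net_opp_mem induced_simple) ?mem_departures_induced ?opp_b1_in //.
by have [-> _] := net_second_segment (mem_head _ _); rewrite addr0.
Qed.

Lemma trans_net_inner t : t \in p ++ q -> trans_net (departures S) t = 0.
Proof.
have [pP _ qP _] := split_linked; rewrite mem_cat /trans_net => /orP[tp|tq].
  have [pr prp /eqP ->] := path_prev pP tp.
  rewrite (net_opp_mem induced_simple) ?oppK ?mem_departures_induced ?(map_f snd prp) //.
  by rewrite (net_mem induced_simple) ?mem_departures_induced ?inE ?map_f ?orbT.
have [pr prq /eqP ->] := path_prev qP tq.
have t2 : t.2 \in D2 by rewrite inE map_f ?orbT.
have [_ ->] := net_second_segment (map_f snd prq).
by have [-> _] := net_second_segment t2; rewrite addr0.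
Qed.

Lemma trans_net_far t :
  t.1.1 \notin map fst (D1 ++ D2) -> t.2.1 \notin map fst (D1 ++ D2) ->
  trans_net (departures S) t = 0.
Proof.
have inD k : k \in departures S -> k.1 \in map fst (D1 ++ D2).
  by rewrite mem_departures_induced => kD1; apply: map_f; rewrite mem_cat kD1.
have net0 h : h.1 \notin map fst (D1 ++ D2) -> net (departures S) h = 0.
  by move=> hD; apply: net_out; apply: contra hD; exact: inD.
by move=> /net0 t1 /net0 t2; rewrite /trans_net t1 t2 addr0.
Qed.

Lemma split_geps : geps a.2 = v /\ geps b.2 = v.
Proof.
have bT : b \in T by rewrite inE mem_cat inE eqxx !orbT.
by split; [rewrite -av | rewrite -bv]; rewrite (transition_geps T_closed) ?mem_head.
Qed.

Lemma split_snd_uniq : uniq (map snd T).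
Proof. by move: T_simple; rewrite /departures => /map_uniq. Qed.

Lemma split_halves_uniq : uniq [:: a.1; a.2; b.1; b.2].
Proof.
have /andP[/allP trT _] := T_closed.
have /andP[a12 _] := trT _ (mem_head _ _).
have /andP[b12 _] : is_transition b by apply: trT; rewrite inE mem_cat inE eqxx !orbT.
have a2D : a.2 \in D1 ++ D2 by rewrite mem_head.
have b2D : b.2 \in D1 ++ D2 by rewrite mem_cat mem_head orbT.
have a1b1 : a.1 != b.1.
  by apply: contraTneq opp_a1_in => ->; apply: split_disjoint opp_b1_in.
have a1b2 : a.1 != b.2.
  have oa1D : opp a.1 \in D1 ++ D2 by rewrite mem_cat opp_a1_in orbT.
  by apply: contraTneq oa1D => ->; apply: opp_notin split_simple b2D.
have a2b1 : a.2 != b.1.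
  have ob1D : opp b.1 \in D1 ++ D2 by rewrite mem_cat opp_b1_in.
  by apply: contraTneq ob1D => <-; apply: opp_notin split_simple a2D.
have a2b2 : a.2 != b.2.
  apply: contraTneq split_snd_uniq => a2b2.
  by rewrite /= map_cat a2b2 mem_cat inE eqxx !orbT.
by rewrite /= !inE !negb_or a12 a1b1 a1b2 a2b1 a2b2 b12.
Qed.

Lemma split_closed : closed_walk S.
Proof.
have [pP pb _ _] := split_linked; have /andP[/allP trT _] := T_closed.
rewrite closed_walkE all_rcons -andbA; apply/and3P; split.
- have [a2v _] := split_geps; rewrite /is_transition /= a2v bv eqxx andbT eq_sym.
  by have := split_halves_uniq; rewrite /= !inE !negb_or => /and4P[_ /andP[]].
- by apply/allP=> t tp; apply: trT; rewrite inE mem_cat tp orbT.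
rewrite -rot1_cons rot_cycle /= rcons_path; apply/andP; split.
  by case: p pP => //= t p'; rewrite /linked.
by case: p pb {pP} => [|t p'] /=; rewrite /linked.
Qed.

Lemma split_edges h : h \in [:: a.1; a.2; b.1; b.2] -> h.1 \in map fst (D1 ++ D2).
Proof.
have edge k : k \in D1 ++ D2 -> k.1 \in map fst (D1 ++ D2) by move=> kD; apply: map_f.
rewrite !inE => /or4P[]/eqP->.
- by apply: (edge (opp a.1)); rewrite mem_cat opp_a1_in orbT.
- by apply: edge; rewrite mem_head.
- by apply: (edge (opp b.1)); rewrite mem_cat opp_b1_in.
- by apply: edge; rewrite mem_cat mem_head orbT.
Qed.

Section FourRegular.
Hypothesis F4 : four_regular G.

Lemma halves_at_split h : (geps h == v) = (h \in [:: a.1; a.2; b.1; b.2]).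
Proof.
have [a2v b2v] := split_geps.
have sub : [:: a.1; a.2; b.1; b.2] \subset [set h | geps h == v].
  by apply/subsetP=> k; rewrite !inE => /or4P[]/eqP->; rewrite ?av ?a2v ?bv ?b2v eqxx.
have card : #|[:: a.1; a.2; b.1; b.2]| = #|[set h | geps h == v]|.
  by rewrite F4; apply/card_uniqP; exact: split_halves_uniq.
by rewrite (subset_cardP card sub h) inE.
Qed.

Lemma transitions_at_split t : t \in T -> geps t.2 = v -> t = a \/ t = b.
Proof.
move=> tT /eqP; rewrite halves_at_split !inE.
have tD : t.2 \in D1 ++ D2 by rewrite -departures_split; apply: map_f.
have snd_inj := uniq_map_inj_in split_snd_uniq.
case/or4P=> /eqP t2.
- by move: tD; rewrite t2 => /(opp_notin split_simple); rewrite mem_cat opp_a1_in orbT.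
- by left; apply: snd_inj; rewrite ?mem_head.
- by move: tD; rewrite t2 => /(opp_notin split_simple); rewrite mem_cat opp_b1_in.
- by right; apply: snd_inj; rewrite // inE mem_cat inE eqxx !orbT.
Qed.

Lemma trans_flow_split d x : in_cycle_space d x -> trans_flow d x a + trans_flow d x b = 0.
Proof.
move/in_cycle_spaceP/(_ v); rewrite (eq_bigl (mem [:: a.1; a.2; b.1; b.2])) => [|h]; last first.
  by rewrite halves_at_split.
by rewrite -big_uniq ?split_halves_uniq // !big_cons big_nil /= addr0 /trans_flow !addrA.
Qed.

End FourRegular.
End Splitting.

Section Deletion.
Variables (F : graph) (X : {set gE F}).
Local Notation D := (del X).
Local Open Scope ring_scope.

Definition val_half (h : half D) : half F := (val h.1, h.2).
Definition val_trans (t : trans D) : trans F := (val_half t.1, val_half t.2).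

Lemma val_half_inj : injective val_half.
Proof. by case=> [e b] [e' b'] [/val_inj -> ->]. Qed.

Lemma closed_walk_val (W : walk D) : closed_walk (map val_trans W) = closed_walk W.
Proof.
rewrite /closed_walk all_map -map_rot; congr (_ && _).
elim: W (rot 1 W) => [|t W IH] [|t' W'] //=; rewrite IH.
by rewrite -[opp (val_half t.2)]/(val_half (opp t.2)) (inj_eq val_half_inj).
Qed.

Lemma val_lift_walk (S : walk F) : (forall t, t \in S -> t.1.1 \notin X /\ t.2.1 \notin X) ->
  map val_trans (lift_walk X S) = S.
Proof.
elim: S => [|[[e1 b1] [e2 b2]] S IH] // H.
have [/= e1X e2X] := H _ (mem_head _ _).
rewrite /lift_walk /= /lift_trans /lift_half /= !insubT /= -/(lift_walk X S) IH //.
by move=> t tS; apply: H; rewrite inE tS orbT.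
Qed.

Definition ext_orient (d : gE D -> bool) (e : gE F) : bool :=
  if insub e is Some e' then d e' else false.

Lemma sigma_val d (W : walk D) (e : gE D) :
  sigma d W e = sigma (ext_orient d) (map val_trans W) (val e).
Proof.
rewrite /sigma !ffunE /departures !big_map /ext_orient valK.
by apply: eq_bigl => t /=; rewrite val_eqE.
Qed.

Definition ext_zero (x : {ffun gE D -> rat}) : {ffun gE F -> rat} :=
  [ffun e => if insub e is Some e' then x e' else 0].

Lemma ext_zero_val x e : ext_zero x (val e) = x e.
Proof. by rewrite ffunE valK. Qed.

Lemma ext_zero_out x e : e \in X -> ext_zero x e = 0.
Proof. by move=> eX; rewrite ffunE insubF // eX. Qed.

Lemma in_cycle_space_ext d x : in_cycle_space d x -> in_cycle_space (ext_orient d) (ext_zero x).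
Proof.
move=> xC v; rewrite -[RHS](xC v) (bigID (fun e => e \in X)) /= big1 ?add0r; last first.
  by move=> e eX; rewrite ext_zero_out ?mulr0.
rewrite (reindex_omap (val : gE D -> gE F) insub) /=; last by move=> e eX; rewrite insubT.
apply: eq_big => [e|e _]; first by rewrite (valP e) valK eqxx.
by rewrite ext_zero_val /incidence /ext_orient valK.
Qed.

End Deletion.

Arguments val_trans {F X} t.

Section EulerCircuit.
Variable G : graph.

Lemma adj_sym : symmetric (@adj G).
Proof.
move=> u w; apply/idP/idP => /existsP[e /existsP[b /andP[ue we]]];
  by apply/existsP; exists e; apply/existsP; exists (~~ b); rewrite negbK ue we.
Qed.

Lemma edge_in_comp_eq (v1 v2 : gV G) e :
  edge_in_comp v1 e -> edge_in_comp v2 e -> edge_in_comp v1 =1 edge_in_comp v2.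
Proof.
have sym := sym_connect_sym adj_sym; rewrite /edge_in_comp => c1 c2 e'.
by apply: same_connect; rewrite // (connect_trans c1) // sym.
Qed.

Lemma edge_in_comp_geps (h : half G) : edge_in_comp (geps h) h.1.
Proof.
case: h => e [|]; rewrite /edge_in_comp /=; last exact: connect0.
by apply: connect1; apply/existsP; exists e; apply/existsP; exists true; rewrite !eqxx.
Qed.

Lemma euler_circ_count (W : walk G) v e :
  euler_circ W v -> count_mem e (map fst (departures W)) = edge_in_comp v e.
Proof. by case/andP=> _ /forallP/(_ e)/eqP <-; rewrite count_map. Qed.

Lemma mem_euler_circ (W : walk G) v e :
  euler_circ W v -> (e \in map fst (departures W)) = edge_in_comp v e.
Proof. by move=> Wv; rewrite -has_pred1 has_count (euler_circ_count _ Wv) lt0b. Qed.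

Lemma euler_circ_simple (W : walk G) v : euler_circ W v -> uniq (map fst (departures W)).
Proof.
by move=> Wv; apply: count_mem_uniq => e; rewrite (mem_euler_circ _ Wv) (euler_circ_count _ Wv).
Qed.

Lemma euler_circ_comp (W : walk G) v1 v2 :
  edge_in_comp v1 =1 edge_in_comp v2 -> euler_circ W v1 = euler_circ W v2.
Proof. by move=> E; rewrite /euler_circ; congr (_ && _); apply: eq_forallb => e; rewrite E. Qed.

Lemma euler_circ_half (W : walk G) v h :
  euler_circ W v -> geps h = v -> exists2 t, t \in W & t.1 = h \/ t.2 = h.
Proof.
move=> Wv hv; have /andP[cW _] := Wv.
have: h.1 \in map fst (departures W) by rewrite (mem_euler_circ _ Wv) -hv edge_in_comp_geps.
case/mapP=> k /mapP[t tW ->] /esym/same_edge_halves[t2h|t2h]; first by exists t => //; right.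
by have [t' t'W t'1] := closed_walk_next cW tW; exists t' => //; left; rewrite t'1 t2h oppK.
Qed.

Lemma euler_circ_visits_twice (W : walk G) v :
  four_regular G -> euler_circ W v -> 1 < count (fun t => geps t.1 == v) W.
Proof.
move=> F4 Wv; have /andP[cW _] := Wv.
set A := filter (fun t => geps t.1 == v) W.
have sub : [set h | geps h == v] \subset [seq t.1 | t <- A] ++ [seq t.2 | t <- A].
  apply/subsetP=> h; rewrite inE => /eqP hv.
  have [t tW th] := euler_circ_half Wv hv.
  have tA : t \in A.
    by rewrite mem_filter tW andbT -hv; case: th => <-; rewrite ?(transition_geps cW tW).
  by rewrite mem_cat; case: th => <-; rewrite map_f ?orbT.
have := leq_trans (subset_leq_card sub) (card_size _).
by rewrite F4 size_cat !size_map size_filter addnn -[4]/(2.*2) leq_double.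
Qed.

Lemma euler_circ_split (W : walk G) v : four_regular G -> euler_circ W v ->
  exists n a b p q, [/\ rot n W = a :: p ++ b :: q, geps a.1 = v & geps b.1 = v].
Proof.
move=> F4 Wv; have twice := euler_circ_visits_twice F4 Wv.
have /hasP[a aW /eqP av] : has (fun t => geps t.1 == v) W by rewrite has_count ltnW.
have [n s Ws] := rot_to aW.
have : has (fun t => geps t.1 == v) s.
  have rW : perm_eq (rot n W) W by rewrite perm_rot.
  by move: twice; rewrite has_count -(permP rW) Ws /= av eqxx.
case/hasP=> b bs /eqP bv; move: Ws; case/splitPr: bs => p q Ws.
by exists n, a, b, p, q.
Qed.

End EulerCircuit.

Section EulerSystem.
Variables (F : graph) (X : {set gE F}) (C : seq (walk F)).
Hypotheses (F4 : four_regular F) (X_based : based X) (C_euler : euler_system C).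
Implicit Types (W S : walk F) (v : gV F) (e : gE F) (h : half F) (t : trans F).
Local Open Scope ring_scope.

Definition avoids S := ~~ has (fun h : half F => h.1 \in X) (departures S).

Lemma euler_circuit_of v : exists2 W, W \in C & euler_circ W v.
Proof.
have [_ /(_ v) cnt _] := C_euler.
by apply/hasP; rewrite has_count cnt.
Qed.

Lemma euler_system_circ W : W \in C -> exists v, euler_circ W v.
Proof. by case: C_euler => _ _ /allP CW /CW /existsP. Qed.

Lemma euler_system_closed W : W \in C -> closed_walk W.
Proof. by case: C_euler => /allP cC _ _ /cC. Qed.

Lemma euler_system_rot W n : W \in C ->
  closed_walk (rot n W) /\ uniq (map fst (departures (rot n W))).
Proof.
move=> WC; rewrite closed_walk_rot euler_system_closed //.
have [v /euler_circ_simple] := euler_system_circ WC.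
by rewrite /departures !map_rot rot_uniq.
Qed.

Lemma euler_system_eq W1 W2 e : W1 \in C -> W2 \in C ->
  e \in map fst (departures W1) -> e \in map fst (departures W2) -> W1 = W2.
Proof.
move=> W1C W2C; have [v1 W1v1] := euler_system_circ W1C.
have [v2 W2v2] := euler_system_circ W2C.
rewrite (mem_euler_circ _ W1v1) (mem_euler_circ _ W2v2) => c1 c2.
have [_ /(_ v1) cnt _] := C_euler.
by apply: count_eq1_eq cnt W1C W2C W1v1 _; rewrite (euler_circ_comp _ (edge_in_comp_eq c1 c2)).
Qed.

Lemma based_comp_eq v e1 e2 : e1 \in X -> e2 \in X ->
  edge_in_comp v e1 -> edge_in_comp v e2 -> e1 = e2.
Proof.
move=> e1X e2X c1 c2; have /eqP/cards1P[e0 E0] := X_based v.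
have : e1 \in [set e in X | edge_in_comp v e] by rewrite inE e1X c1.
have : e2 \in [set e in X | edge_in_comp v e] by rewrite inE e2X c2.
by rewrite E0 !inE => /eqP -> /eqP ->.
Qed.

Lemma euler_system_edge e : exists2 W, W \in C &
  e \in map fst (departures W) /\ has (mem X) (map fst (departures W)).
Proof.
have [W WC Wv] := euler_circuit_of (geps (e, false)).
exists W => //; rewrite (mem_euler_circ _ Wv) edge_in_comp_geps; split=> //.
have /eqP/cards1P[e0 E0] := X_based (geps (e, false)).
have : e0 \in [set f in X | edge_in_comp (geps (e, false)) f] by rewrite E0 set11.
by rewrite inE => /andP[e0X e0c]; apply/hasP; exists e0; rewrite ?(mem_euler_circ _ Wv).
Qed.

Lemma trans_flow_vanishing d (y : gE F -> rat) :
  (forall W t, W \in C -> t \in W -> trans_flow d y t = 0) ->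
  {in X, forall e, y e = 0} -> forall e, y e = 0.
Proof.
move=> y0 yX e; have [W WC [eW /hasP[e0 e0W e0X]]] := euler_system_edge e.
have := euler_system_closed WC; rewrite closed_walkE => /andP[_ cycW].
have same_flow : {in W &, forall t t', half_flow d y t.2 = half_flow d y t'.2}.
  apply: cycle_eq_in cycW _ => t t' _ t'W /eqP t'1.
  have := y0 _ _ WC t'W; rewrite /trans_flow t'1 half_flow_opp.
  by move/eqP; rewrite addrC subr_eq0 => /eqP.
have [k /mapP[t tW ->] ->] := mapP eW.
have [k0 /mapP[t0 t0W ->] e0E] := mapP e0W.
have : half_flow d y t.2 = 0 by rewrite (same_flow _ _ tW t0W) /half_flow -e0E yX ?mul0r.
rewrite /half_flow /half_sign => /eqP; rewrite mulf_eq0 => /orP[/eqP //|].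
by case: ifP; rewrite ?oppr_eq0 oner_eq0.
Qed.

Lemma exists_induced v : exists S, induced_circuit X C v S.
Proof.
have [W WC Wv] := euler_circuit_of v.
have [n [a [b [p [q [Wn av bv]]]]]] := euler_circ_split F4 Wv.
have [Tc Ts] := euler_system_rot n WC; rewrite Wn in Tc Ts.
have [S1X|S1X] := boolP (avoids (rcons p (b.1, a.2))).
  by move: Wn av bv S1X; case: a b {Tc Ts} => [x y] [z u] Wn av bv S1X;
    exists (rcons p (z, y)), W => //; exists n, x, y, z, u, p, q.
have [k Wk] : exists k, rot k W = b :: q ++ a :: p.
  have [k Ek] := rot_of_rot (size (a :: p)) n W; exists k.
  by rewrite -Ek Wn -cat_cons rot_size_cat.
suff S2X : avoids (rcons q (a.1, b.2)).
  by move: Wk av bv S2X; case: a b {Tc Ts Wn S1X} => [x y] [z u] Wk av bv S2X;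
    exists (rcons q (x, u)), W => //; exists k, z, u, x, y, q, p.
apply: contra S1X => /hasP[h2 h2S h2X]; apply/negP => /hasP[h1 h1S h1X].
rewrite (mem_departures_induced a) in h1S; rewrite (mem_departures_induced b) in h2S.
have comp h : h \in departures (rot n W) -> edge_in_comp v h.1.
  by move=> hD; rewrite -(mem_euler_circ _ Wv) -(mem_rot n) -map_rot /departures -map_rot map_f.
have hD h : h \in (a.2 :: map snd p) ++ b.2 :: map snd q -> h \in departures (rot n W).
  by rewrite Wn departures_split.
have h1D : h1 \in (a.2 :: map snd p) ++ b.2 :: map snd q by rewrite mem_cat h1S.
have h2D : h2 \in (a.2 :: map snd p) ++ b.2 :: map snd q by rewrite mem_cat h2S orbT.
have h12 := based_comp_eq h1X h2X (comp _ (hD _ h1D)) (comp _ (hD _ h2D)).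
have := split_disjoint Ts h1S; rewrite (uniq_map_inj_in (split_simple Ts) h1D h2D h12).
by rewrite h2S.
Qed.

Lemma sigma_avoids d S e : avoids S -> e \in X -> sigma d S e = 0.
Proof.
move=> SX eX; rewrite ffunE big_hasC //; apply: contra SX => /hasP[h hS /eqP he].
by apply/hasP; exists h; rewrite ?he.
Qed.

Lemma sigmaQ_avoids d S e : avoids S -> e \in X -> sigmaQ d S e = 0.
Proof. by move=> SX eX; rewrite ffunE sigma_avoids. Qed.

Definition induced_from v S (a : trans F) : Prop :=
  exists2 W, W \in C & exists n b p q,
    [/\ rot n W = a :: p ++ b :: q, geps a.1 = v, geps b.1 = v,
         S = rcons p (b.1, a.2) & avoids S].

Lemma induced_circuit_from v S : induced_circuit X C v S -> exists a, induced_from v S a.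
Proof.
case=> W WC [n [x [y [z [u [p [q [Wn xv zv SE SX]]]]]]]].
by exists (x, y), W => //; exists n, (z, u), p, q.
Qed.

Section Basis.
Variables (g : gV F -> walk F) (a : gV F -> trans F).
Hypothesis g_induced : forall v, induced_from v (g v) (a v).

Lemma induced_closed v : closed_walk (g v).
Proof.
have [W WC [n [b [p [q [Wn av bv -> _]]]]]] := g_induced v.
have [Tc Ts] := euler_system_rot n WC; rewrite Wn in Tc Ts.
exact: split_closed Tc Ts av bv.
Qed.

Lemma induced_avoids v : avoids (g v).
Proof. by have [W _ [n [b [p [q [_ _ _ _ ->]]]]]] := g_induced v. Qed.

Lemma trans_net_other v w W t : W \in C -> t \in W -> geps t.1 = v -> v != w ->
  trans_net (departures (g w)) t = 0.
Proof.
move=> WC tW tv vw.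
have [Ww WwC [n [b [p [q [Wn aw bw -> _]]]]]] := g_induced w.
have [Tc Ts] := euler_system_rot n WwC; rewrite Wn in Tc Ts.
have [WE|WWw] := eqVneq W Ww.
  have ta : t != a w by apply: contraNneq vw => ta; rewrite -tv ta aw.
  have tb : t != b by apply: contraNneq vw => tb; rewrite -tv tb bw.
  move: tW; rewrite WE -(mem_rot n) Wn !(inE, mem_cat) (negbTE ta) (negbTE tb) /= => tpq.
  by rewrite (trans_net_inner Tc Ts) // mem_cat.
have far e : e \in map fst (departures W) -> e \notin map fst (departures (a w :: p ++ b :: q)).
  move=> eW; rewrite -Wn /departures !map_rot mem_rot; apply: contra WWw => eWw.
  by rewrite (euler_system_eq WC WwC eW eWw).
have [t' t'W t1] := closed_walk_prev (euler_system_closed WC) tW.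
have t1X : t.1.1 \notin map fst (departures (a w :: p ++ b :: q)).
  by rewrite t1; apply: far; exact (map_f fst (map_f snd t'W)).
have t2X : t.2.1 \notin map fst (departures (a w :: p ++ b :: q)).
  by apply: far; exact (map_f fst (map_f snd tW)).
by rewrite (trans_net_far (q := q)) // -departures_split.
Qed.

Lemma first_trans_net v w : trans_net (departures (g w)) (a v) = (v == w)%:Z.
Proof.
have [W WC [n [b [p [q [Wn av bv gv _]]]]]] := g_induced v.
have [<-|vw] := eqVneq v w; last first.
  by apply: (trans_net_other WC _ av vw); rewrite -(mem_rot n) Wn mem_head.
have [Tc Ts] := euler_system_rot n WC; rewrite Wn in Tc Ts.
by rewrite gv (trans_net_first Tc Ts).
Qed.

Lemma trans_flow_comb d (c : gV F -> rat) t v :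
  (forall w, w != v -> trans_net (departures (g w)) t = 0) ->
  trans_flow d (fun e => \sum_w c w * sigmaQ d (g w) e) t
    = c v * (trans_net (departures (g v)) t)%:~R.
Proof.
move=> t0; rewrite trans_flow_sum (bigD1 v) //= big1 ?addr0 ?trans_flow_sigmaQ // => w wv.
by rewrite trans_flow_sigmaQ t0 ?mulr0.
Qed.

Lemma trans_flow_comb_first d (c : gV F -> rat) v :
  trans_flow d (fun e => \sum_w c w * sigmaQ d (g w) e) (a v) = c v.
Proof.
rewrite (trans_flow_comb _ _ (v := v)) => [|w wv]; first by rewrite first_trans_net eqxx mulr1.
by rewrite first_trans_net eq_sym (negbTE wv).
Qed.

Lemma induced_span d (x : {ffun gE F -> rat}) : in_cycle_space d x -> {in X, forall e, x e = 0} ->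
  forall e, x e = \sum_v trans_flow d x (a v) * sigmaQ d (g v) e.
Proof.
move=> xC xX; pose r e := x e - \sum_v trans_flow d x (a v) * sigmaQ d (g v) e.
suff r0 e : r e = 0 by move=> e; apply/eqP; rewrite -subr_eq0; apply/eqP/r0.
move: e; apply: (trans_flow_vanishing (d := d)) => [W t WC tW | e eX]; last first.
  by rewrite /r xX // big1 ?subr0 // => v _; rewrite sigmaQ_avoids ?induced_avoids ?mulr0.
pose v := geps t.2; have [Wv WvC [n [b [p [q [Wn av bv gv _]]]]]] := g_induced v.
have [Tc Ts] := euler_system_rot n WvC; rewrite Wn in Tc Ts.
have r_a : trans_flow d r (a v) = 0.
  by rewrite trans_flowB trans_flow_comb_first subrr.
have r_b : trans_flow d r b = 0.
  rewrite trans_flowB (trans_flow_comb _ _ (v := v)) => [|w wv].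
    rewrite gv (trans_net_second Tc Ts) // mulrN1 opprK addrC.
    by rewrite (trans_flow_split Tc Ts av bv F4 xC).
  rewrite eq_sym in wv; apply: (trans_net_other WvC _ bv wv).
  by rewrite -(mem_rot n) Wn !(inE, mem_cat) eqxx !orbT.
have WE : W = Wv.
  apply: euler_system_eq WC WvC (map_f fst (map_f snd tW)) _.
  rewrite -(mem_rot n) /departures -!map_rot -/(departures _) Wn departures_split.
  by apply: (split_edges Tc); rewrite -(halves_at_split Tc Ts av bv F4).
have tT : t \in a v :: p ++ b :: q by rewrite -Wn mem_rot -WE.
by case: (transitions_at_split Tc Ts av bv F4 tT erefl) => ->.
Qed.

Lemma lift_induced v : map val_trans (lift_walk X (g v)) = g v.
Proof.
have /hasPn gX := induced_avoids v.
apply: val_lift_walk => t tg; split; last exact: gX (map_f snd tg).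
by have [t' t'g ->] := closed_walk_prev (induced_closed v) tg; exact: gX (map_f snd t'g).
Qed.

Lemma sigma_lift d v (e : gE (del X)) :
  sigma d (lift_walk X (g v)) e = sigma (ext_orient d) (g v) (val e).
Proof. by rewrite sigma_val lift_induced. Qed.

Lemma sigmaQ_lift d v (e : gE (del X)) :
  sigmaQ d (lift_walk X (g v)) e = sigmaQ (ext_orient d) (g v) (val e).
Proof. by rewrite !sigmaQE sigma_lift. Qed.

Lemma lift_induced_closed v : closed_walk (lift_walk X (g v)).
Proof. by rewrite -closed_walk_val lift_induced induced_closed. Qed.

Lemma lift_induced_sigma_inj d :
  injective (fun v : gV (del X) => sigma d (lift_walk X (g v))).
Proof.
move=> v w /= E; set d' := ext_orient d.
have Ed : sigma d' (g v) = sigma d' (g w).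
  apply/ffunP=> e; have [eX|eX] := boolP (e \in X).
    by rewrite !sigma_avoids ?induced_avoids.
  by move/ffunP/(_ (Sub e eX)): E; rewrite !sigma_lift.
have := first_trans_net v w.
by rewrite (trans_net_sigma d') -Ed -trans_net_sigma first_trans_net eqxx; case: eqP.
Qed.

Lemma lift_induced_free d (c : gV F -> rat) :
  (forall e : gE (del X), \sum_v c v * sigmaQ d (lift_walk X (g v)) e = 0) -> forall v, c v = 0.
Proof.
move=> c0 v; set d' := ext_orient d.
have comb0 e : \sum_w c w * sigmaQ d' (g w) e = 0.
  have [eX|eX] := boolP (e \in X).
    by rewrite big1 // => w _; rewrite sigmaQ_avoids ?induced_avoids ?mulr0.
  apply: etrans (c0 (Sub e eX)); apply: eq_bigr => w _.
  by rewrite sigmaQ_lift SubK.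
by rewrite -(trans_flow_comb_first d') /trans_flow /half_flow !comb0 !mul0r addr0.
Qed.

Lemma lift_induced_span d x : in_cycle_space d x ->
  exists c : gV F -> rat, forall e : gE (del X), x e = \sum_v c v * sigmaQ d (lift_walk X (g v)) e.
Proof.
move=> xC; exists (fun v => trans_flow (ext_orient d) (ext_zero x) (a v)) => e.
rewrite -ext_zero_val (induced_span (in_cycle_space_ext xC) (@ext_zero_out _ _ x)).
by apply: eq_bigr => v _; rewrite (sigmaQ_lift d v e).
Qed.

Lemma lift_induced_integral : integral (fun v : gV (del X) => lift_walk X (g v)).
Proof.
move=> d W WC; set d' := ext_orient d; set W' := map val_trans W.
have W'C : closed_walk W' by rewrite closed_walk_val.
have W'X : avoids W'.
  by apply/hasPn => h; rewrite /departures -map_comp => /mapP[t _ ->]; exact: (valP t.2.1).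
exists (fun v => trans_net (departures W') (a v)) => e; apply: (@intr_inj rat).
rewrite sigma_val -sigmaQE.
rewrite (induced_span (closed_walk_cycle_space d' W'C) (fun e => sigmaQ_avoids d' W'X)).
rewrite rmorph_sum; apply: eq_bigr => v _.
by rewrite trans_flow_sigmaQ rmorphM /= sigma_lift sigmaQE.
Qed.

Lemma induced_integral_cycle_basis :
  integral_cycle_basis (fun v : gV (del X) => lift_walk X (g v)).
Proof.
split; last exact: lift_induced_integral.
split=> [v | d]; first exact: lift_induced_closed.
split; first exact: lift_induced_sigma_inj.
split; [move=> v | exact: lift_induced_free | exact: lift_induced_span].
exact: closed_walk_cycle_space (lift_induced_closed v).
Qed.

End Basis.

End EulerSystem.

Theorem mainTheorem16 (F : graph) (X : {set gE F}) (C : seq (walk F)) :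
  four_regular F -> based X -> euler_system C ->
  (forall v : gV F, exists S : walk F, induced_circuit X C v S) /\
  (forall g : gV F -> walk F, (forall v, induced_circuit X C v (g v)) ->
     integral_cycle_basis (fun v : gV (del X) => lift_walk X (g v))).
Proof.
move=> F4 X_based C_euler; split=> [v | g g_induced]; first exact: exists_induced.
have [a a_induced] := fin_all_exists (fun v => induced_circuit_from (g_induced v)).
exact: induced_integral_cycle_basis a_induced.
Qed.
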